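(* Let $N\ge 2$, fix real $\Omega\neq 0$ and real $\delta$, and let $J^{(1)}=(J^{(1)}_{i,j})_{1\le i<j\le N}$ and $J^{(2)}=(J^{(2)}_{i,j})_{1\le i<j\le N}$ be real coupling families with $J^{(1)}\neq J^{(2)}$. For $k=1,2$ let $$\hat{H}_k = \Omega \sum_{i=1}^N \hat{\sigma}_i^x + \delta \sum_{i=1}^N \hat{\sigma}_i^z + \sum_{1\le i<j\le N} J^{(k)}_{i,j} \hat{\sigma}_i^z \hat{\sigma}_j^z,$$ and let $|\Psi_k\rangle$ be the (unique up to phase) ground state of $\hat H_k$. Then $|\Psi_1\rangle$ and $|\Psi_2\rangle$ are not equal (not proportional), i.e. no vector is simultaneously a ground state of $\hat H_1$ and of $\hat H_2$.
   Context: $\hat\sigma_i^x,\hat\sigma_i^z$ are Pauli matrices acting on the $i$-th factor of $(\mathbb{C}^2)^{\otimes N}$. For $\Omega\neq0$ the ground state of such a Hamiltonian is nondegenerate and has nonzero overlap with every computational basis state $|\sigma_1,\dots,\sigma_N\rangle$ (simultaneous eigenstates of all $\hat\sigma_i^z$). *)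

From HB Require Import structures.
From mathcomp Require Import all_boot all_order all_algebra.
From mathcomp Require Import complex.
Set Implicit Arguments. Unset Strict Implicit. Unset Printing Implicit Defensive.
Import Order.TTheory GRing.Theory Num.Theory.
Local Open Scope ring_scope.
Local Open Scope complex_scope.

(* Computational basis of (C^2)^{(x)N}: spin configurations sigma : 'I_N -> bool,
   true <-> sigma_i = +1 (spin up), false <-> sigma_i = -1.
   A state of the N-spin system is the family of its amplitudes in this basis. *)
Notation config N := {ffun 'I_N -> bool}.
Notation state R N := {ffun config N -> R[i]}.
Notation operator R N := (state R N -> state R N).

Definition spin (R : rcfType) (b : bool) : R[i] := if b then 1 else -1.

Definition flip N (i : 'I_N) (s : config N) : config N :=
  [ffun k => if k == i then ~~ s k else s k].

(* Pauli operators acting on the i-th tensor factor, in the computational basis: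
   sigma^x_i |s> = |flip_i s>,  sigma^z_i |s> = spin(s_i) |s>. *)
Definition sigmax (R : rcfType) N (i : 'I_N) : operator R N :=
  fun psi => [ffun s : config N => psi (flip i s)].
Definition sigmaz (R : rcfType) N (i : 'I_N) : operator R N :=
  fun psi => [ffun s : config N => spin R (s i) * psi s].

Definition hamiltonian (R : rcfType) (N : nat) (Omega delta : R)
    (J : 'I_N -> 'I_N -> R) : operator R N :=
  fun psi =>
    (Omega%:C *: \sum_(i < N) sigmax i psi
     + delta%:C *: \sum_(i < N) sigmaz i psi
     + \sum_(i < N) \sum_(j < N | (i < j)%N) (J i j)%:C *: sigmaz i (sigmaz j psi))%R.

Definition eigen (R : rcfType) N (H : operator R N) (E : R[i]) (psi : state R N) :=
  psi != 0 /\ H psi = E *: psi.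

Definition ground_state (R : rcfType) N (H : operator R N) (psi : state R N) :=
  exists E : R[i], eigen H E psi /\
    forall (mu : R[i]) (phi : state R N), eigen H mu phi -> E <= mu.

From HB Require Import structures.
From mathcomp Require Import all_boot all_order all_algebra.
From mathcomp Require Import complex ring zify.
Set Implicit Arguments. Unset Strict Implicit. Unset Printing Implicit Defensive.
Import Order.TTheory GRing.Theory Num.Theory.
Local Open Scope ring_scope.

(** In the computational basis the Hamiltonian is a real symmetric
matrix whose off-diagonal part is [Omega] times the adjacency matrix of the
hypercube of spin configurations. Conjugating by the diagonal sign pattern
[(-sgn Omega)^(number of up spins)] makes this part entrywise nonpositive, so
by the variational principle the sign-corrected modulus of a ground state is
again a ground state. Its eigen-equation at a vanishing amplitude forces all
neighbouring amplitudes to vanish, and since the hypercube is connected a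
ground state has no zero amplitude. A common ground state [psi] of [H_1] and
[H_2] with energies [E_1], [E_2] therefore makes the difference of the Ising
energies constant, equal to [E_1 - E_2]; the mixed second difference of this
constant in the spins [a] and [b] is [4 (J1_ab - J2_ab)], hence zero. *)

Section Variational.
Variable C : numClosedFieldType.
Local Open Scope sesquilinear_scope.

Lemma form_diag_mxE n (w d : 'rV[C]_n) :
  (w *m diag_mx d *m w ^t*) 0 0 = \sum_k d 0 k * `|w 0 k| ^+ 2.
Proof.
rewrite mul_mx_diag !mxE; apply: eq_bigr => k _.
by rewrite !mxE normCK mulrCA mulrA.
Qed.

Lemma form1_mxE n (w : 'rV[C]_n) : (w *m w ^t*) 0 0 = \sum_k `|w 0 k| ^+ 2.
Proof. by rewrite !mxE; apply: eq_bigr => k _; rewrite !mxE normCK. Qed.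

Lemma normalmx_form_spectral n (A : 'M[C]_n) (v : 'rV_n) : A \is normalmx ->
  let w := v *m (spectralmx A) ^t* in
  (v *m A *m v ^t*) 0 0 = \sum_k spectral_diag A 0 k * `|w 0 k| ^+ 2 /\
  (v *m v ^t*) 0 0 = \sum_k `|w 0 k| ^+ 2.
Proof.
move=> /orthomx_spectralP hA w.
have Pu := spectral_unitarymx A.
have wC : w ^t* = spectralmx A *m v ^t* by rewrite trmx_mul map_mxM trmxCK.
split; first by rewrite -form_diag_mxE wC {1}hA invmx_unitary // !mulmxA.
by rewrite -form1_mxE wC mulmxA /w mulmxKtV.
Qed.

Lemma normalmx_spectral_row_eigen n (A : 'M[C]_n) k : A \is normalmx ->
  row k (spectralmx A) *m A = spectral_diag A 0 k *: row k (spectralmx A).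
Proof.
move=> /orthomx_spectralP; set P := spectralmx A; set d := spectral_diag A => hA.
rewrite {1}hA rowE !mulmxA mulmxK ?spectral_unit // mul_mx_diag scalemxAl.
congr (_ *m _); apply/matrixP => i j; rewrite !mxE ord1 eqxx /=.
by case: eqP => [->|_]; rewrite ?mulr1 ?mul1r ?mulr0 ?mul0r.
Qed.

Lemma spectral_row_neq0 n (A : 'M[C]_n) k : row k (spectralmx A) != 0.
Proof.
apply/eqP => rk0; have := unitarymxP (spectral_unitarymx A).
move/(congr1 (row k)); rewrite row_mul rk0 mul0mx => /rowP/(_ k).
by rewrite !mxE eqxx => /eqP; rewrite eq_sym oner_eq0.
Qed.

Lemma normalmx_form_ge_min n (A : 'M[C]_n) (E : C) : A \is normalmx ->
  (forall mu (v : 'rV_n), v != 0 -> v *m A = mu *: v -> E <= mu) ->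
  forall v : 'rV_n,
  E * (v *m v ^t*) 0 0 <= (v *m A *m v ^t*) 0 0 /\
  ((v *m A *m v ^t*) 0 0 = E * (v *m v ^t*) 0 0 -> v *m A = E *: v).
Proof.
move=> An hmin v; have [-> ->] := normalmx_form_spectral v An.
set d := spectral_diag A; set w := v *m _.
have dE k : E <= d 0 k.
  exact: hmin _ _ (spectral_row_neq0 A k) (normalmx_spectral_row_eigen k An).
have gapE : \sum_k d 0 k * `|w 0 k| ^+ 2 - E * \sum_k `|w 0 k| ^+ 2 =
            \sum_k (d 0 k - E) * `|w 0 k| ^+ 2.
  by rewrite mulr_sumr -sumrB; apply: eq_bigr => k _; rewrite mulrBl.
have gap_ge0 k : 0 <= (d 0 k - E) * `|w 0 k| ^+ 2.
  by rewrite mulr_ge0 ?subr_ge0 ?dE ?exprn_ge0.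
split; first by rewrite -subr_ge0 gapE sumr_ge0.
move/eqP; rewrite -subr_eq0 gapE => /eqP gap_sum0.
have gap0 := psumr_eq0P (fun k _ => gap_ge0 k) gap_sum0.
have Pu := spectral_unitarymx A.
have -> : v *m A = w *m diag_mx d *m spectralmx A.
  by rewrite {1}(orthomx_spectralP An) invmx_unitary // !mulmxA.
rewrite -(mulmxKtV v Pu) // -/w scalemxAl mul_mx_diag; congr (_ *m _).
apply/rowP => k; rewrite mxE [RHS]mxE; move/eqP: (gap0 k isT).
rewrite mulf_eq0 subr_eq0 expf_eq0 /= normr_eq0.
by case/orP => /eqP->; rewrite ?mulr0 ?mul0r // mulrC.
Qed.
End Variational.

Section KernelForm.
Variables (C : numClosedFieldType) (T : finType) (K : T -> T -> C).
Local Open Scope sesquilinear_scope.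

Definition kernel_form (u : {ffun T -> C}) : C :=
  \sum_s (\sum_t u t * K t s) * (u s)^*.

Definition eigen_lower_bound (E : C) :=
  forall mu (f : {ffun T -> C}), f != 0 ->
    (forall s, \sum_t f t * K t s = mu * f s) -> E <= mu.

Lemma sum_enum_val (F : T -> C) : \sum_(k < #|T|) F (enum_val k) = \sum_t F t.
Proof. by rewrite -big_enum_val. Qed.

Lemma kernel_form_ge_min (E : C) :
  (forall s t, K t s = (K s t)^*) -> eigen_lower_bound E ->
  forall u : {ffun T -> C},
  E * \sum_s `|u s| ^+ 2 <= kernel_form u /\
  (kernel_form u = E * \sum_s `|u s| ^+ 2 -> forall s, \sum_t u t * K t s = E * u s).
Proof.
move=> hK hmin u.
pose A : 'M[C]_#|T| := \matrix_(k, l) K (enum_val k) (enum_val l).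
have An : A \is normalmx.
  have AC : A ^t* = A by apply/matrixP => k l; rewrite !mxE -hK.
  by apply/normalmxP; rewrite AC.
have act (f : {ffun T -> C}) l :
    ((\row_k f (enum_val k)) *m A) 0 l = \sum_t f t * K t (enum_val l).
  by rewrite mxE -sum_enum_val; apply: eq_bigr => k _; rewrite !mxE.
have hmin_mx mu (w : 'rV_#|T|) : w != 0 -> w *m A = mu *: w -> E <= mu.
  move=> w_neq0 wA; pose f := [ffun t => w 0 (enum_rank t)].
  have wE : w = \row_k f (enum_val k).
    by apply/rowP => k; rewrite !mxE ffunE enum_valK.
  apply: (hmin mu f).
    by apply: contraNneq w_neq0 => f0; rewrite wE f0; apply/eqP/rowP => k; rewrite !mxE ffunE.
  by move=> s; rewrite -[s]enum_rankK -act -wE wA !mxE ffunE enum_valK.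
pose v : 'rV[C]_#|T| := \row_k u (enum_val k).
have [ge_min eq_min] := normalmx_form_ge_min An hmin_mx v.
have formE : (v *m A *m v ^t*) 0 0 = kernel_form u.
  by rewrite mxE /kernel_form -sum_enum_val; apply: eq_bigr => k _; rewrite act !mxE.
have normE : (v *m v ^t*) 0 0 = \sum_s `|u s| ^+ 2.
  by rewrite form1_mxE -sum_enum_val; apply: eq_bigr => k _; rewrite mxE.
rewrite -formE -normE; split => // /eq_min vA s.
by rewrite -[s]enum_rankK -act vA !mxE.
Qed.
End KernelForm.

Local Open Scope complex_scope.

Section SpinChain.
Variables (R : rcfType) (N : nat).
Local Notation C := R[i].

Lemma flipK (i : 'I_N) : involutive (@flip N i).
Proof. by move=> s; apply/ffunP => k; rewrite !ffunE; case: (k == i); rewrite ?negbK. Qed.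

Lemma flip_eq_sym (i : 'I_N) s t : (flip i s == t) = (flip i t == s).
Proof. by apply/eqP/eqP => <-; apply: flipK. Qed.

Lemma spin_flip (i : 'I_N) s k :
  spin R (flip i s k) = (if k == i then -1 else 1) * spin R (s k).
Proof. by rewrite ffunE /spin; case: (k == i); case: (s k); rewrite ?mul1r ?mulN1r ?opprK. Qed.

Lemma flip_closed_all (Z : pred (config N)) s0 :
  (forall s i, Z s -> Z (flip i s)) -> Z s0 -> forall t, Z t.
Proof.
move=> Z_flip Z0 t; have [n] := ubnP #|[pred i | t i != s0 i]|.
elim: n t => // n IHn t; rewrite ltnS => diff_le.
have [i /= t_i | diff0] := pickP [pred i | t i != s0 i]; last first.
  suff -> : t = s0 by [].
  by apply/ffunP => i; apply/eqP/negbFE/diff0.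
rewrite -(flipK i t); apply/Z_flip/IHn/(leq_trans _ diff_le)/proper_card/properP.
split; last by exists i; rewrite !inE ?ffunE ?eqxx //=; move: t_i; case: (t i); case: (s0 i).
by apply/subsetP => j; rewrite !inE ffunE; case: (j =P i) => [-> _|//]; exact: t_i.
Qed.

Definition ising_energy (c : 'I_N -> 'I_N -> C) (s : config N) : C :=
  \sum_(i < N) \sum_(j < N | (i < j)%N) c i j * (spin R (s i) * spin R (s j)).

Definition potential (delta : R) (J : 'I_N -> 'I_N -> R) (s : config N) : C :=
  delta%:C * \sum_(i < N) spin R (s i) + ising_energy (fun i j => (J i j)%:C) s.

Lemma hamiltonianE Omega delta J (psi : state R N) s :
  hamiltonian Omega delta J psi s =
  Omega%:C * \sum_i psi (flip i s) + potential delta J s * psi s.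
Proof.
rewrite !ffunE !sum_ffunE /potential /ising_energy mulrDl -addrA.
congr (_ * _ + (_ + _)); first by apply: eq_bigr => i _; rewrite ffunE.
  by rewrite -mulrA mulr_suml; congr (_ * _); apply: eq_bigr => i _; rewrite ffunE.
rewrite mulr_suml; apply: eq_bigr => i _; rewrite sum_ffunE mulr_suml.
by apply: eq_bigr => j _; rewrite !ffunE -!mulrA.
Qed.

Lemma ising_energyB (c1 c2 : 'I_N -> 'I_N -> C) s :
  ising_energy c1 s - ising_energy c2 s = ising_energy (fun i j => c1 i j - c2 i j) s.
Proof.
rewrite -sumrB; apply: eq_bigr => i _; rewrite -sumrB.
by apply: eq_bigr => j _; rewrite mulrBl.
Qed.

Lemma hamiltonianB Omega delta J1 J2 (psi : state R N) s :
  hamiltonian Omega delta J1 psi s - hamiltonian Omega delta J2 psi s =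
  ising_energy (fun i j => (J1 i j)%:C - (J2 i j)%:C) s * psi s.
Proof. by rewrite !hamiltonianE -ising_energyB /potential; ring. Qed.

Lemma spin_pair_second_diff (a b i j : 'I_N) (s : config N) : (a < b)%N -> (i < j)%N ->
  spin R (s i) * spin R (s j) - spin R (flip a s i) * spin R (flip a s j)
  - spin R (flip b s i) * spin R (flip b s j)
  + spin R (flip a (flip b s) i) * spin R (flip a (flip b s) j)
  = ((i == a) && (j == b))%:R * (4%:R * (spin R (s i) * spin R (s j))).
Proof.
move=> lt_ab lt_ij; rewrite !spin_flip -!(inj_eq val_inj) /=.
move: lt_ab lt_ij; do 4![case: eqP => ?] => /= *; try lia; ring.
Qed.

Lemma ising_energy_second_diff (c : 'I_N -> 'I_N -> C) (a b : 'I_N) s : (a < b)%N ->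
  ising_energy c s - ising_energy c (flip a s) - ising_energy c (flip b s)
  + ising_energy c (flip a (flip b s)) = 4%:R * c a b * (spin R (s a) * spin R (s b)).
Proof.
move=> lt_ab.
transitivity (\sum_(i < N) \sum_(j < N | (i < j)%N)
   c i j * (((i == a) && (j == b))%:R * (4%:R * (spin R (s i) * spin R (s j))))).
  rewrite /ising_energy -!sumrB -big_split /=; apply: eq_bigr => i _.
  rewrite -!sumrB -big_split /=; apply: eq_bigr => j lt_ij.
  by rewrite -(spin_pair_second_diff s lt_ab lt_ij); ring.
rewrite (bigD1 a) //= [X in _ + X]big1 ?addr0 => [|i ia]; last first.
  by rewrite big1 // => j _; rewrite (negbTE ia) mul0r mulr0.
rewrite (bigD1 b) //= [X in _ + X]big1 ?addr0 => [|j /andP[_ jb]]; last first.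
  by rewrite (negbTE jb) andbF mul0r mulr0.
by rewrite !eqxx /=; ring.
Qed.

Lemma ising_coupling_eq0 (c : 'I_N -> 'I_N -> C) (k : C) (a b : 'I_N) :
  (forall s, ising_energy c s = k) -> (a < b)%N -> c a b = 0.
Proof.
move=> energy_const lt_ab.
have := ising_energy_second_diff c [ffun => true] lt_ab.
rewrite !energy_const !ffunE /spin !mulr1 (_ : k - k - k + k = 0); last by ring.
by move/esym/eqP; rewrite mulf_eq0 pnatr_eq0 => /eqP.
Qed.

Definition ham_kernel Omega delta J (t s : config N) : C :=
  Omega%:C * (\sum_(i < N) (flip i s == t)%:R) + (s == t)%:R * potential delta J s.

Lemma hamiltonian_kernelE Omega delta J (psi : state R N) s :
  hamiltonian Omega delta J psi s = \sum_t psi t * ham_kernel Omega delta J t s.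
Proof.
have pick_at (F : config N -> C) a : \sum_t F t * (a == t)%:R = F a.
  rewrite (bigD1 a) //= eqxx mulr1 big1 ?addr0 // => t ta.
  by rewrite eq_sym (negbTE ta) mulr0.
rewrite hamiltonianE /ham_kernel; apply/esym; under eq_bigr do rewrite mulrDr.
rewrite big_split /=; congr (_ + _).
  under eq_bigr do rewrite mulrCA mulr_sumr.
  rewrite -mulr_sumr exchange_big /=; congr (_ * _).
  by apply: eq_bigr => i _; rewrite pick_at.
under eq_bigr => t _ do rewrite (mulrC (_%:R)) mulrA.
by rewrite pick_at mulrC.
Qed.

Lemma ham_kernel_herm Omega delta J t s :
  ham_kernel Omega delta J t s = (ham_kernel Omega delta J s t)^*%R.
Proof.
have spin_real b : spin R b \is Num.real by case: b; rewrite /spin ?rpredN rpred1.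
have pot_real : potential delta J t \is Num.real.
  rewrite rpredD ?rpredM ?complex_real ?rpred_sum // => i _.
  by rewrite rpred_sum // => j _; rewrite !rpredM ?complex_real.
rewrite conj_Creal; last first.
  by rewrite rpredD ?rpredM ?complex_real ?rpred_nat ?rpred_sum // => i _; rewrite rpred_nat.
rewrite /ham_kernel; congr (_ * _ + _); first by apply: eq_bigr => i _; rewrite flip_eq_sym.
by case: (eqVneq s t) => [->|st] //; rewrite !mul0r.
Qed.

End SpinChain.

Section GroundState.
Variables (R : rcfType) (N : nat) (Omega delta : R) (J : 'I_N -> 'I_N -> R).
Hypothesis Omega_neq0 : Omega != 0.
Local Notation C := R[i].
Local Notation H := (hamiltonian Omega delta J).
Local Notation K := (ham_kernel Omega delta J).
Local Notation sg := (- Num.sg Omega%:C).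

Definition hopping (u : state R N) : C :=
  \sum_s \sum_(i < N) u (flip i s) * (u s)^*%R.

Lemma kernel_form_hamiltonian (u : state R N) :
  kernel_form K u = Omega%:C * hopping u + \sum_s potential delta J s * `|u s| ^+ 2.
Proof.
rewrite /kernel_form; under eq_bigr do rewrite -hamiltonian_kernelE hamiltonianE mulrDl.
rewrite big_split /= mulr_sumr; congr (_ + _); apply: eq_bigr => s _.
  by rewrite -mulrA mulr_suml.
by rewrite normCK mulrA.
Qed.

Lemma norm_hopping_le (u : state R N) :
  `|hopping u| <= \sum_s \sum_(i < N) `|u (flip i s)| * `|u s|.
Proof.
rewrite (le_trans (ler_norm_sum _ _ _)) // ler_sum // => s _.
rewrite (le_trans (ler_norm_sum _ _ _)) // ler_sum // => i _.
by rewrite normrM norm_conjC.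
Qed.

Lemma OmegaC_neq0 : Omega%:C != 0.
Proof. by rewrite eq_complex /= eqxx andbT. Qed.

(* Conjugation by this diagonal sign matrix turns the hopping term of [H] into
   [-|Omega|] times the adjacency matrix of the hypercube. *)
Definition sign_pattern (t : config N) : C := \prod_(i < N) (if t i then sg else 1).

Lemma sign_pattern_flip i s : sign_pattern (flip i s) = sg * sign_pattern s.
Proof.
have sg2 : sg * sg = 1 by rewrite -expr2 sqrrN sqr_sg OmegaC_neq0.
rewrite /sign_pattern (bigD1 i) //= [in RHS](bigD1 i) //= ffunE eqxx mulrA.
congr (_ * _); first by case: (s i); rewrite ?sg2 ?mulr1.
by apply: eq_bigr => j ji; rewrite ffunE (negbTE ji).
Qed.

Lemma norm_sign_pattern t : `|sign_pattern t| = 1.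
Proof.
rewrite normr_prod big1 // => i _.
by case: (t i); rewrite ?normr1 // normrN normr_sg OmegaC_neq0.
Qed.

Definition abs_state (psi : state R N) : state R N :=
  [ffun t => sign_pattern t * `|psi t|].

Lemma norm_abs_state psi t : `|abs_state psi t| = `|psi t|.
Proof. by rewrite ffunE normrM norm_sign_pattern mul1r normr_id. Qed.

Lemma hopping_abs_state psi :
  Omega%:C * hopping (abs_state psi) =
  - `|Omega%:C| * \sum_s \sum_(i < N) `|psi (flip i s)| * `|psi s|.
Proof.
have Omega_sg : Omega%:C * sg = - `|Omega%:C|.
  have OmegaR : Omega%:C \is Num.real by rewrite complex_real.
  by rewrite mulrN {1}(realEsg OmegaR) mulrAC -expr2 sqr_sg OmegaC_neq0 mul1r.
rewrite /hopping !mulr_sumr; apply: eq_bigr => s _; rewrite !mulr_sumr.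
apply: eq_bigr => i _; rewrite !ffunE sign_pattern_flip rmorphM /=.
rewrite [`|psi s|^*%R]conj_Creal ?normr_real //.
have spK : sign_pattern s * (sign_pattern s)^*%R = 1.
  by rewrite -normCK norm_sign_pattern expr1n.
transitivity (Omega%:C * sg * (`|psi (flip i s)| * `|psi s|) *
              (sign_pattern s * (sign_pattern s)^*%R)); first by ring.
by rewrite spK mulr1 Omega_sg mulrA.
Qed.

Lemma ground_state_eigen (psi : state R N) : ground_state H psi ->
  exists E, [/\ psi != 0, forall s, H psi s = E * psi s & eigen_lower_bound K E].
Proof.
case=> E [[psi_neq0 Hpsi] hmin]; exists E; split=> // [s|mu f f_neq0 hf].
  by rewrite Hpsi ffunE.
by apply: (hmin mu f); split=> //; apply/ffunP => s; rewrite hamiltonian_kernelE ffunE hf.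
Qed.

Lemma abs_state_eigen (psi : state R N) (E : C) :
  (forall s, H psi s = E * psi s) -> eigen_lower_bound K E ->
  forall s, H (abs_state psi) s = E * abs_state psi s.
Proof.
move=> Hpsi hmin.
have [ge_min eq_min] := kernel_form_ge_min (fun s t => ham_kernel_herm _ _ _ t s)
  hmin (abs_state psi).
set m := `|Omega%:C| * \sum_s \sum_(i < N) `|psi (flip i s)| * `|psi s|.
set x := Omega%:C * hopping psi.
set gap := kernel_form K (abs_state psi) - E * \sum_s `|abs_state psi s| ^+ 2.
have form_psi : kernel_form K psi = E * \sum_s `|psi s| ^+ 2.
  rewrite mulr_sumr; apply: eq_bigr => s _.
  by rewrite -hamiltonian_kernelE Hpsi normCK mulrA.
have gapE : gap = - (m + x).
  rewrite /gap kernel_form_hamiltonian hopping_abs_state.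
  under [X in _ + X - _]eq_bigr do rewrite norm_abs_state.
  under [X in E * X]eq_bigr do rewrite norm_abs_state.
  move: form_psi; rewrite kernel_form_hamiltonian => form_psi.
  rewrite -form_psi /m /x; ring.
have gap_ge0 : 0 <= gap by rewrite subr_ge0.
have m_ge0 : 0 <= m.
  by rewrite mulr_ge0 ?sumr_ge0 // => s _; rewrite sumr_ge0 // => i _; rewrite mulr_ge0.
have norm_x_le : `|x| <= m by rewrite normrM ler_wpM2l ?norm_hopping_le.
have norm_x : `|x| = m + gap.
  have -> : x = - (m + gap) by rewrite gapE; ring.
  by rewrite normrN ger0_norm //; apply: addr_ge0.
have gap0 : gap = 0 by apply/le_anti; rewrite gap_ge0 andbT -(lerD2l m) addr0 -norm_x.
by move=> s; rewrite hamiltonian_kernelE; apply: eq_min; apply/eqP; rewrite -subr_eq0 -/gap gap0.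
Qed.

Lemma ground_state_neq0 (psi : state R N) : ground_state H psi -> forall s, psi s != 0.
Proof.
case/ground_state_eigen => E [psi_neq0 Hpsi hmin].
have zero_flip s i : psi s == 0 -> psi (flip i s) == 0.
  move/eqP=> psi_s0; move: (abs_state_eigen Hpsi hmin s).
  rewrite hamiltonianE !ffunE psi_s0 normr0 !mulr0 addr0.
  under eq_bigr do rewrite ffunE sign_pattern_flip -mulrA.
  move/eqP; rewrite -!mulr_sumr !mulf_eq0 oppr_eq0 sgr_eq0 (negbTE OmegaC_neq0).
  rewrite -normr_eq0 norm_sign_pattern oner_eq0 /= => /eqP sum0.
  by rewrite -normr_eq0 (psumr_eq0P (fun j _ => normr_ge0 _) sum0).
move=> s; apply/negP => psi_s0; apply: (negP psi_neq0); apply/eqP/ffunP => t.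
by rewrite ffunE; apply/eqP; apply: (flip_closed_all (Z := [pred s | psi s == 0])) psi_s0 t.
Qed.

End GroundState.

Theorem mainTheorem3 (R : rcfType) (N : nat) (hN : (2 <= N)%N)
    (Omega delta : R) (hOmega : Omega != 0)
    (J1 J2 : 'I_N -> 'I_N -> R)
    (hJ : exists i j : 'I_N, (i < j)%N /\ J1 i j != J2 i j) :
  ~ (exists psi : state R N,
       ground_state (hamiltonian Omega delta J1) psi /\
       ground_state (hamiltonian Omega delta J2) psi).
Proof.
case=> psi [ground1 ground2].
have [E1 [_ H1 _]] := ground_state_eigen ground1.
have [E2 [_ H2 _]] := ground_state_eigen ground2.
have psi_neq0 := ground_state_neq0 hOmega ground1.
have energy_const s : ising_energy (fun i j => (J1 i j)%:C - (J2 i j)%:C) s = E1 - E2.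
  by apply: (mulIf (psi_neq0 s)); rewrite mulrBl -H1 -H2 hamiltonianB.
case: hJ => a [b [lt_ab /eqP J12]]; apply: J12; apply/complexI/eqP.
by rewrite -subr_eq0; apply/eqP; apply: ising_coupling_eq0 energy_const lt_ab.
Qed.
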